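(* Let $N\geq 2$ be an integer and let $\mu,m,q$ be independent indeterminates over $\mathbb C$. Then the polynomial $$P(X)=X^{2N-1}+\mu^{N}m\,q\,X^{N-1}+\mu^{2N-1}q^{2}$$ is irreducible in $\mathbb C(\mu,m,q)[X]$. Equivalently, its $2N-1$ roots, regarded as multivalued algebraic functions of $(\mu,m,q)$, are permuted transitively by analytic continuation along closed loops in the parameter space.
   Context: Physical meaning (for orientation only): this is the polynomial equation satisfied by the glueball operator $S$ in the $\mathrm U(N)$ gauge theory with one adjoint field $\phi$, a single flavour of quarks of mass $m$, and tree-level superpotential $\frac12\mu\,\mathrm{Tr}\,\phi^2+\tilde Q(\phi-m)Q$, with instanton factor $q$. Its $2N-1$ roots are the glueball condensates in the $N$ ''confining'' vacua (unbroken $\mathrm U(N)$) and the $N-1$ ''Higgs'' vacua (gauge group broken to $\mathrm U(N-1)$); the statement that these vacua can all be smoothly connected to each other (a single phase) is the irreducibility of $P$. *)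

From HB Require Import structures.
From mathcomp Require Import all_boot all_order all_algebra.
From mathcomp Require Import fraction complex.
From mathcomp Require Import Rstruct.
From Stdlib Require Rdefinitions.
Set Implicit Arguments. Unset Strict Implicit. Unset Printing Implicit Defensive.
Import Order.TTheory GRing.Theory Num.Theory.
Local Open Scope ring_scope.

Definition CC : fieldType := (Rdefinitions.R)[i].

Definition Kmu : fieldType := {fraction {poly CC}}.
(* C(mu)(m) = C(mu,m) *)
Definition Kmum : fieldType := {fraction {poly Kmu}}.
(* C(mu,m)(q) = C(mu,m,q) *)
Definition Kmumq : fieldType := {fraction {poly Kmum}}.

Local Notation "x %:F" := (@FracField.tofrac _ x) (format "x %:F").

Definition mu : Kmumq := ((((('X : {poly CC})%:F : Kmu)%:P)%:F : Kmum)%:P)%:F.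
Definition mass : Kmumq := ((('X : {poly Kmu})%:F : Kmum)%:P)%:F.
Definition qinst : Kmumq := ('X : {poly Kmum})%:F.

Definition glueP (N : nat) : {poly Kmumq} :=
  'X^(2 * N - 1) + (mu ^+ N * mass * qinst) *: 'X^(N - 1)
  + (mu ^+ (2 * N - 1) * qinst ^+ 2)%:P.

(* Over K = C(mu, m) the polynomial P lies in K[q][X], so by Gauss' lemma it
   suffices that a factorisation A * B = c * P with 0 <> c in K[q] is trivial.
   Give q the weight e = 2N - 1 and X the weight 2: the terms q^2, q X^(N-1)
   and X^e of P weigh 2e, 2e - 1 and 2e, so the Newton polygon of P is the
   segment from (0, 2) to (e, 0), which has no interior lattice point as e is
   odd (Eisenstein-Dumas).  The first and the last index of a coefficient of
   maximal weight add up under multiplication, so a factor A attains its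
   maximal weight at X^0 and at X^(deg A); comparing the two weights gives
   e | 2 deg A, hence deg A = 0 or deg A = e. *)

From mathcomp Require Import all_boot all_algebra fraction generic_quotient.
From mathcomp Require Import zify ring.
Set Implicit Arguments. Unset Strict Implicit. Unset Printing Implicit Defensive.
Import GRing.Theory.
Local Open Scope ring_scope.
Local Open Scope quotient_scope.

Local Notation tofrac := (@FracField.tofrac _).
Local Notation "x %:F" := (tofrac x) (format "x %:F").

Section GaussTransfer.
Variable R : idomainType.

Lemma tofrac_repr (x : {fraction R}) : exists a b : R, b != 0 /\ x * b%:F = a%:F.
Proof.
elim/quotW: x => r; exists (frac r).1, (frac r).2; split; first exact: denom_ratioP.
have piE1 y : y%:F = \pi_({fraction R}) (Ratio y 1) by rewrite piE.
rewrite !piE1 -[_ * _]FracField.pi_mul; apply/eqmodP => /=.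
by rewrite FracField.equivfE /FracField.mulf !numden_Ratio ?mulf_neq0 ?oner_eq0
  ?denom_ratioP // !mulr1 mulrC.
Qed.

Lemma poly_tofrac_repr (A : {poly {fraction R}}) :
  exists (d : R) (A' : {poly R}), d != 0 /\ map_poly tofrac A' = d%:F *: A.
Proof.
elim/poly_ind: A => [|A c [d [A' [d_neq0 defA']]]].
  by exists 1, 0; rewrite oner_neq0 map_poly0 scaler0.
have [u [v [v_neq0 defc]]] := tofrac_repr c.
exists (d * v), (v *: A' * 'X + (d * u)%:P); split; first by rewrite mulf_neq0.
rewrite rmorphD rmorphM /= map_polyX map_polyC /= map_polyZ defA' !rmorphM /= -defc.
by rewrite -!mul_polyC !polyCM; ring.
Qed.

Lemma irreducible_map_tofrac (P : {poly R}) : (1 < size P)%N ->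
    (forall (c : R) (A B : {poly R}), c != 0 -> A * B = c *: P ->
       size A = 1%N \/ size B = 1%N) ->
  irreducible_poly (map_poly tofrac P).
Proof.
move=> sizeP factorP.
have tofrac_inj : injective (tofrac : R -> {fraction R}).
  by move=> x y /eqP; rewrite tofrac_eq => /eqP.
have sizePF : size (map_poly tofrac P) = size P by rewrite size_map_inj_poly.
split=> [|d size_d d_dvd]; first by rewrite sizePF.
have PF_neq0 : map_poly tofrac P != 0 by rewrite -size_poly_eq0 sizePF; lia.
have d_neq0 : d != 0 by apply: contraNneq PF_neq0 => d0; move: d_dvd; rewrite d0 dvd0p.
have defPF := divpK d_dvd; set d' := _ %/ d in defPF.
have d'_neq0 : d' != 0 by apply: contraNneq PF_neq0 => d'0; rewrite -defPF d'0 mul0r.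
have [dA [A [dA_neq0 defA]]] := poly_tofrac_repr d.
have [dB [B [dB_neq0 defB]]] := poly_tofrac_repr d'.
have size_map_scale (u : R) (f : {poly {fraction R}}) : u != 0 -> size (u%:F *: f) = size f.
  by move=> u_neq0; rewrite size_scale // tofrac_eq0.
have defAB : A * B = (dA * dB) *: P.
  apply: (map_inj_poly tofrac_inj (rmorph0 _)).
  rewrite rmorphM /= defA defB map_polyZ -defPF -scalerAl -scalerAr scalerA.
  by rewrite rmorphM /= [d * _]mulrC.
have [sizeA | sizeB] := factorP _ _ _ (mulf_neq0 dA_neq0 dB_neq0) defAB.
- by move: size_d; rewrite -(size_map_scale dA d) // -defA size_map_inj_poly ?sizeA.
- rewrite -dvdp_size_eqp // -defPF size_mul // -(size_map_scale dB d') // -defB.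
  by rewrite size_map_inj_poly // sizeB.
Qed.

End GaussTransfer.

Section WeightedDegree.
Variables (K : idomainType) (a b : nat).
Hypothesis a_gt0 : (0 < a)%N.
Implicit Types f g : {poly {poly K}}.

(* [size] is the degree plus one, whence the offsets [+ a] below; a zero
   coefficient gets weight 0. *)
Definition wdeg f i : nat := if f`_i == 0 then 0%N else (a * size (f`_i)%R + b * i)%N.

Lemma wdeg_eq0 f i : (wdeg f i == 0%N) = (f`_i == 0).
Proof.
rewrite /wdeg; case: ifP => // /negbT fi_neq0.
by rewrite addn_eq0 muln_eq0 size_poly_eq0 (negbTE fi_neq0) eqn0Ngt a_gt0.
Qed.

Lemma wdeg_mul_term f g j k : (j <= k)%N -> f`_j * g`_(k - j) != 0 ->
  (a * size (f`_j * g`_(k - j))%R + b * k + a = wdeg f j + wdeg g (k - j))%N.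
Proof.
move=> le_jk; rewrite mulf_eq0 negb_or => /andP[fj_neq0 gj_neq0].
rewrite /wdeg (negbTE fj_neq0) (negbTE gj_neq0) size_mul //.
have := size_poly_gt0 f`_j; have := size_poly_gt0 g`_(k - j).
rewrite fj_neq0 gj_neq0; nia.
Qed.

Lemma wdegM_dominated f g k : (f * g)`_k != 0 ->
  exists2 j, (j <= k)%N & (wdeg (f * g) k + a <= wdeg f j + wdeg g (k - j))%N.
Proof.
move=> fgk_neq0; have size_fgk := size_sum (index_enum 'I_k.+1) predT
  (fun j : 'I_k.+1 => f`_j * g`_(k - j)).
have [j defmax] := @eq_bigmax _ (fun j : 'I_k.+1 => size (f`_j * g`_(k - j)))
  ltac:(by rewrite card_ord).
rewrite -coefM defmax in size_fgk.
have le_jk : (j <= k)%N by rewrite -ltnS.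
have term_neq0 : f`_j * g`_(k - j) != 0.
  by rewrite -size_poly_eq0 -lt0n (leq_trans _ size_fgk) // size_poly_gt0.
exists j => //; rewrite -wdeg_mul_term // /wdeg (negbTE fgk_neq0).
by rewrite !leq_add2r leq_mul2l size_fgk orbT.
Qed.

Lemma wdegM_le f g k T : (a <= T)%N ->
    (forall j, j <= k -> wdeg f j + wdeg g (k - j) <= T)%N ->
  (wdeg (f * g) k + a <= T)%N.
Proof.
move=> le_aT le_terms; have [fgk0|/wdegM_dominated[j le_jk]] := boolP ((f * g)`_k == 0).
  by rewrite -wdeg_eq0 in fgk0; rewrite (eqP fgk0).
by move/leq_trans; apply; apply: le_terms.
Qed.

Lemma wdegM_lt f g k T : (a < T)%N ->
    (forall j, j <= k -> wdeg f j + wdeg g (k - j) < T)%N ->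
  (wdeg (f * g) k + a < T)%N.
Proof.
move=> lt_aT lt_terms; have [fgk0|/wdegM_dominated[j le_jk]] := boolP ((f * g)`_k == 0).
  by rewrite -wdeg_eq0 in fgk0; rewrite (eqP fgk0).
by move/leq_ltn_trans; apply; apply: lt_terms.
Qed.

Lemma wdegM_eq f g k i : (i <= k)%N -> f`_i * g`_(k - i) != 0 ->
    (forall j, j <= k -> j != i ->
       wdeg f j + wdeg g (k - j) < wdeg f i + wdeg g (k - i))%N ->
  (wdeg (f * g) k + a = wdeg f i + wdeg g (k - i))%N.
Proof.
move=> le_ik term_neq0 lt_terms; have lt_ik1 : (i < k.+1)%N by [].
set t := f`_i * g`_(k - i) in term_neq0 *.
have size_rest :
    (size (\sum_(j < k.+1 | j != Ordinal lt_ik1) f`_j * g`_(k - j))%R < size t)%N.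
  apply: leq_ltn_trans (size_sum _ _ _) _.
  rewrite -[size t]prednK ?size_poly_gt0 // ltnS; apply/bigmax_leqP => j ne_ji.
  have le_jk : (j <= k)%N by rewrite -ltnS.
  have [->|term_j_neq0] := eqVneq (f`_j * g`_(k - j)) 0; first by rewrite size_poly0.
  rewrite -ltnS prednK ?size_poly_gt0 //.
  have := lt_terms j le_jk ne_ji; rewrite -!wdeg_mul_term // !ltn_add2r ltn_mul2l.
  by case/andP.
have size_fgk : size (f * g)`_k = size t by rewrite coefM (bigD1 (Ordinal lt_ik1)) ?size_addl.
have fgk_neq0 : (f * g)`_k != 0 by rewrite -size_poly_eq0 size_fgk size_poly_eq0.
by rewrite -wdeg_mul_term // /wdeg (negbTE fgk_neq0) size_fgk.
Qed.

Lemma wdeg_ge f i : f`_i != 0 -> (a <= wdeg f i)%N.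
Proof.
move=> fi_neq0; rewrite /wdeg (negbTE fi_neq0).
have := size_poly_gt0 f`_i; rewrite fi_neq0; nia.
Qed.

Definition wmax f : nat := \max_(i < size f) wdeg f i.

Lemma wdeg_le_wmax f i : (wdeg f i <= wmax f)%N.
Proof.
have [lt_if|le_fi] := ltnP i (size f).
  by rewrite /wmax (@leq_bigmax _ (fun j : 'I_(size f) => wdeg f j) (Ordinal lt_if)).
by rewrite /wdeg nth_default ?eqxx.
Qed.

Lemma wmax_ge f : f != 0 -> (a <= wmax f)%N.
Proof.
move=> f_neq0; apply: leq_trans (wdeg_le_wmax f (size f).-1).
by apply: wdeg_ge; rewrite -lead_coefE lead_coef_eq0.
Qed.

Lemma coef_wmax_neq0 f i : f != 0 -> wdeg f i = wmax f -> f`_i != 0.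
Proof.
move=> f_neq0 wfi; rewrite -wdeg_eq0 wfi -lt0n.
exact: leq_trans a_gt0 (wmax_ge f_neq0).
Qed.

Definition first_wmax f i :=
  wdeg f i = wmax f /\ forall j, (j < i)%N -> (wdeg f j < wmax f)%N.
Definition last_wmax f i :=
  wdeg f i = wmax f /\ forall j, (i < j)%N -> (wdeg f j < wmax f)%N.

Lemma wmax_attained f : f != 0 -> exists i, wdeg f i == wmax f.
Proof.
move=> f_neq0; have [i defmax] := @eq_bigmax _ (fun i : 'I_(size f) => wdeg f i)
  ltac:(by rewrite card_ord size_poly_gt0).
by exists i; rewrite /wmax defmax.
Qed.

Lemma wmax_eq f i V : (forall j, wdeg f j <= V)%N -> wdeg f i = V -> wmax f = V.
Proof.
move=> le_V wfi; apply/eqP; rewrite eqn_leq -{2}wfi wdeg_le_wmax andbT.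
by apply/bigmax_leqP => j _; apply: le_V.
Qed.

Lemma first_wmax_exists f : f != 0 -> exists i, first_wmax f i.
Proof.
move=> /wmax_attained exP; have [i /eqP wfi min_i] := ex_minnP exP.
exists i; split=> // j lt_ji; rewrite ltn_neqAle wdeg_le_wmax andbT.
by apply: contraTneq lt_ji => /eqP/min_i; rewrite -leqNgt.
Qed.

Lemma last_wmax_exists f : f != 0 -> exists i, last_wmax f i.
Proof.
move=> f_neq0; have exP := wmax_attained f_neq0.
have ubP i : wdeg f i == wmax f -> (i <= size f)%N.
  move=> /eqP/(coef_wmax_neq0 f_neq0); apply: contraR; rewrite -ltnNge => lt_fi.
  by rewrite nth_default // ltnW.
have [i /eqP wfi max_i] := ex_maxnP exP ubP.
exists i; split=> // j lt_ij; rewrite ltn_neqAle wdeg_le_wmax andbT.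
by apply: contraTneq lt_ij => /eqP/max_i; rewrite -leqNgt.
Qed.

Lemma first_wmax_unique f i j : first_wmax f i -> first_wmax f j -> i = j.
Proof.
move=> [wfi min_i] [wfj min_j].
by case: (ltngtP i j) => // [/min_j | /min_i]; rewrite ?wfi ?wfj ltnn.
Qed.

Lemma last_wmax_unique f i j : last_wmax f i -> last_wmax f j -> i = j.
Proof.
move=> [wfi max_i] [wfj max_j].
by case: (ltngtP i j) => // [/max_i | /max_j]; rewrite ?wfi ?wfj ltnn.
Qed.

Section Product.
Variables (f g : {poly {poly K}}).
Hypotheses (f_neq0 : f != 0) (g_neq0 : g != 0).

Lemma wdegM_le_wmax k : (wdeg (f * g) k + a <= wmax f + wmax g)%N.
Proof.
apply: wdegM_le => [|j _]; last exact: leq_add (wdeg_le_wmax _ _) (wdeg_le_wmax _ _).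
exact: leq_trans (wmax_ge f_neq0) (leq_addr _ _).
Qed.

Lemma wdegM_lt_wmax k :
    (forall j, j <= k -> wdeg f j < wmax f \/ wdeg g (k - j) < wmax g)%N ->
  (wdeg (f * g) k + a < wmax f + wmax g)%N.
Proof.
move=> lt_terms; apply: wdegM_lt => [|j /lt_terms[lt_f | lt_g]].
- by apply: leq_trans (leq_add (wmax_ge f_neq0) (wmax_ge g_neq0)); rewrite -addn1 leq_add2l.
- exact: leq_trans (leq_add lt_f (wdeg_le_wmax _ _)) _.
- by rewrite -addnS; exact: leq_add (wdeg_le_wmax _ _) lt_g.
Qed.

Lemma wdegM_wmax i k : wdeg f i = wmax f -> wdeg g (k - i) = wmax g -> (i <= k)%N ->
    (forall l, l <= k -> l != i -> wdeg f l < wmax f \/ wdeg g (k - l) < wmax g)%N ->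
  (wdeg (f * g) k + a = wmax f + wmax g)%N.
Proof.
move=> wfi wgki le_ik lt_terms; rewrite -wfi -wgki; apply: wdegM_eq => //.
  by rewrite mulf_neq0 // coef_wmax_neq0.
move=> l le_lk ne_li; rewrite wfi wgki.
have [lt_f | lt_g] := lt_terms l le_lk ne_li.
  exact: leq_trans (leq_add lt_f (wdeg_le_wmax _ _)) _.
by rewrite -addnS; exact: leq_add (wdeg_le_wmax _ _) lt_g.
Qed.

Lemma wdegM_first i j : first_wmax f i -> first_wmax g j ->
  (wdeg (f * g) (i + j) + a = wmax f + wmax g)%N.
Proof.
move=> [wfi min_i] [wgj min_j]; apply: (wdegM_wmax (i := i)); rewrite ?addKn ?leq_addr //.
move=> l le_l ne_li; case: (ltngtP l i) => [/min_i | lt_il | eq_li]; [by left | right |].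
  by apply: min_j; lia.
by rewrite eq_li eqxx in ne_li.
Qed.

Lemma wdegM_last i j : last_wmax f i -> last_wmax g j ->
  (wdeg (f * g) (i + j) + a = wmax f + wmax g)%N.
Proof.
move=> [wfi max_i] [wgj max_j]; apply: (wdegM_wmax (i := i)); rewrite ?addKn ?leq_addr //.
move=> l le_l ne_li; case: (ltngtP l i) => [lt_li | /max_i | eq_li]; [right | by left |].
  by apply: max_j; lia.
by rewrite eq_li eqxx in ne_li.
Qed.

Lemma wmaxM : (wmax (f * g) + a = wmax f + wmax g)%N.
Proof.
have [i fi] := first_wmax_exists f_neq0; have [j gj] := first_wmax_exists g_neq0.
have [k [wk _]] := first_wmax_exists (mulf_neq0 f_neq0 g_neq0).
have := wdegM_le_wmax k; have := wdegM_first fi gj; have := wdeg_le_wmax (f * g) (i + j).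
rewrite wk => le_at eq_at le_max.
by apply/eqP; rewrite eqn_leq le_max -eq_at leq_add2r.
Qed.

Lemma first_wmaxM i j : first_wmax f i -> first_wmax g j -> first_wmax (f * g) (i + j).
Proof.
move=> fi gj; have [[_ min_i] [_ min_j]] := (fi, gj); split.
  by apply/eqP; rewrite -(eqn_add2r a) wmaxM wdegM_first.
move=> k lt_k; rewrite -(ltn_add2r a) wmaxM; apply: wdegM_lt_wmax => l le_lk.
by case: (ltnP l i) => [/min_i | le_il]; [left | right; apply: min_j; lia].
Qed.

Lemma last_wmaxM i j : last_wmax f i -> last_wmax g j -> last_wmax (f * g) (i + j).
Proof.
move=> fi gj; have [[_ max_i] [_ max_j]] := (fi, gj); split.
  by apply/eqP; rewrite -(eqn_add2r a) wmaxM wdegM_last.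
move=> k lt_k; rewrite -(ltn_add2r a) wmaxM; apply: wdegM_lt_wmax => l le_lk.
by case: (ltnP i l) => [/max_i | le_li]; [left | right; apply: max_j; lia].
Qed.

End Product.

Lemma coef_neq0_size f i : f`_i != 0 -> (i < size f)%N.
Proof. by apply: contraR; rewrite -leqNgt => le_fi; rewrite nth_default. Qed.

Lemma wmax_ends_factor (A B : {poly {poly K}}) : coprime a b -> A != 0 -> B != 0 ->
    size (A * B) = a.+1 -> first_wmax (A * B) 0 -> last_wmax (A * B) a ->
  size A = 1%N \/ size B = 1%N.
Proof.
move=> co_ab A_neq0 B_neq0 size_AB first0 last_a.
have [iA fA] := first_wmax_exists A_neq0; have [iB fB] := first_wmax_exists B_neq0.
have [jA lA] := last_wmax_exists A_neq0; have [jB lB] := last_wmax_exists B_neq0.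
have iA0 : iA = 0%N.
  by have := first_wmax_unique (first_wmaxM A_neq0 B_neq0 fA fB) first0; case: iA {fA}.
have sum_j : (jA + jB = a)%N := last_wmax_unique (last_wmaxM A_neq0 B_neq0 lA lB) last_a.
have AjA_neq0 := coef_wmax_neq0 A_neq0 lA.1.
have BjB_neq0 := coef_wmax_neq0 B_neq0 lB.1.
have A0_neq0 : A`_0 != 0 by rewrite -iA0 (coef_wmax_neq0 A_neq0 fA.1).
have := coef_neq0_size AjA_neq0; have := coef_neq0_size BjB_neq0.
move: size_AB; rewrite size_mul // -subn1 => size_AB lt_jB lt_jA.
have a_dvd_jA : (a %| jA)%N.
  have := fA.1; rewrite iA0 -lA.1 /wdeg (negbTE A0_neq0) (negbTE AjA_neq0) => eq_w.
  rewrite -(Gauss_dvdr _ co_ab); apply/dvdnP.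
  exists (size (A`_0)%R - size (A`_jA)%R)%N; rewrite mulnBl; lia.
have [t def_jA] := dvdnP a_dvd_jA.
have : (t <= 1)%N by nia.
set sA := size A in size_AB lt_jA *; set sB := size B in size_AB lt_jB *.
case: t def_jA => [|[|//]] def_jA _; [left | right]; lia.
Qed.

End WeightedDegree.

Section Trinomial.
Variables (K : idomainType) (e k : nat) (beta gamma : K).
Hypotheses (k_gt0 : (0 < k)%N) (lt_2k_e : (2 * k < e)%N).

Definition trinomial : {poly {poly K}} :=
  'X^e + (beta *: 'X) *: 'X^k + (gamma *: 'X^2)%:P.

Lemma coef_trinomial i : trinomial`_i =
  if i == 0%N then gamma *: 'X^2 else if i == k then beta *: 'X
  else if i == e then 1 else 0.
Proof.
rewrite !coefD coefZ !coefXn coefC.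
have e_gt0 : (0 < e)%N by lia.
have lt_ke : (k < e)%N by lia.
have [->|i_neq0] := eqVneq i 0%N.
  by rewrite (ltn_eqF e_gt0) (ltn_eqF k_gt0) mulr0 !add0r.
rewrite addr0; have [->|i_neq_k] := eqVneq i k.
  by rewrite (ltn_eqF lt_ke) mulr1 add0r.
by rewrite mulr0 addr0; case: (i == e).
Qed.

Lemma size_trinomial : size trinomial = e.+1.
Proof.
rewrite /trinomial -addrA size_addl size_polyXn //.
apply: leq_ltn_trans (size_polyD _ _) _; rewrite gtn_max.
rewrite (leq_ltn_trans (size_scale_leq _ _)) ?(leq_ltn_trans (size_polyC_leq1 _)) //.
all: rewrite ?size_polyXn; lia.
Qed.

Hypotheses (beta_neq0 : beta != 0) (gamma_neq0 : gamma != 0).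

Lemma wdeg_scale_trinomial (c : {poly K}) i : c != 0 ->
  wdeg e 2 (c *: trinomial) i =
    if i == 0%N then (e * (size c + 2))%N
    else if i == k then (e * (size c + 1) + 2 * k)%N
    else if i == e then (e * size c + 2 * e)%N else 0%N.
Proof.
move=> c_neq0; have size_cXn (r : K) n : r != 0 -> size (c * (r *: 'X^n)) = (size c + n)%N.
  by move=> r_neq0; rewrite -scalerAr size_scale // size_mulXn // addnC.
have cXn_neq0 (r : K) n : r != 0 -> c * (r *: 'X^n) != 0.
  by move=> r_neq0; rewrite -size_poly_eq0 size_cXn // addn_eq0 size_poly_eq0 (negbTE c_neq0).
rewrite /wdeg coefZ coef_trinomial.
have [->|i_neq0] := eqVneq i 0%N.
  by rewrite /= (negbTE (cXn_neq0 _ _ gamma_neq0)) size_cXn // muln0 addn0.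
have [->|i_neq_k] := eqVneq i k.
  by rewrite /= -['X]expr1 (negbTE (cXn_neq0 _ _ beta_neq0)) size_cXn.
have [->|i_neq_e] := eqVneq i e; first by rewrite /= mulr1 (negbTE c_neq0).
by rewrite /= mulr0 eqxx.
Qed.

Hypothesis odd_e : odd e.

Lemma trinomial_factor (c : {poly K}) (A B : {poly {poly K}}) :
  c != 0 -> A * B = c *: trinomial -> size A = 1%N \/ size B = 1%N.
Proof.
move=> c_neq0 defAB; have co_e2 : coprime e 2 by rewrite coprimen2.
clear odd_e; have e_gt0 : (0 < e)%N by lia.
have size_cT : size (c *: trinomial) = e.+1 by rewrite size_scale // size_trinomial.
have /andP[A_neq0 B_neq0] : (A != 0) && (B != 0).
  by rewrite -negb_or -mulf_eq0 defAB -size_poly_eq0 size_cT.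
have wdeg_le j : (wdeg e 2 (c *: trinomial) j <= e * (size c + 2))%N.
  rewrite wdeg_scale_trinomial //.
  by case: eqP => ?; [|case: eqP => ?; [|case: eqP => ?]]; lia.
have wmax_cT := wmax_eq wdeg_le (wdeg_scale_trinomial 0 c_neq0).
apply: (wmax_ends_factor e_gt0 co_e2); rewrite ?defAB //.
  by split=> //; rewrite wmax_cT wdeg_scale_trinomial ?eqxx.
split=> [|j lt_ej]; rewrite wmax_cT wdeg_scale_trinomial //.
  by case: eqP => ?; [|case: eqP => ?; [|case: eqP => ?]]; lia.
by case: eqP => ?; [|case: eqP => ?; [|case: eqP => ?]]; lia.
Qed.

End Trinomial.

Definition mu_Kmum : Kmum := ((('X : {poly CC})%:F : Kmu)%:P)%:F.
Definition mass_Kmum : Kmum := ('X : {poly Kmu})%:F.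

Lemma map_trinomial_glueP N :
  map_poly tofrac
    (trinomial (2 * N - 1) (N - 1) (mu_Kmum ^+ N * mass_Kmum) (mu_Kmum ^+ (2 * N - 1))) = glueP N.
Proof.
rewrite /trinomial /glueP !rmorphD /= map_polyXn map_polyZ /= map_polyXn map_polyC /=.
by rewrite -!mul_polyC !rmorphM /= !polyC_exp !rmorphXn.
Qed.

Theorem lemma4p1 (N : nat) (hN : (2 <= N)%N) : irreducible_poly (glueP N).
Proof.
have [k_gt0 lt_2k_e] : (0 < N - 1 /\ 2 * (N - 1) < 2 * N - 1)%N by lia.
have odd_e : odd (2 * N - 1).
  by rewrite (_ : 2 * N - 1 = (2 * (N - 1)).+1)%N ?oddS ?oddM //=; lia.
have mu_Kmum_neq0 : mu_Kmum != 0 by rewrite !tofrac_eq0 polyC_eq0 tofrac_eq0 polyX_eq0.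
have mass_Kmum_neq0 : mass_Kmum != 0 by rewrite tofrac_eq0 polyX_eq0.
rewrite -map_trinomial_glueP; apply: irreducible_map_tofrac => [|c A B].
  by rewrite size_trinomial // ltnS (leq_ltn_trans (leq0n _) lt_2k_e).
apply: (trinomial_factor k_gt0 lt_2k_e _ (expf_neq0 _ mu_Kmum_neq0) odd_e).
exact: mulf_neq0 (expf_neq0 _ mu_Kmum_neq0) mass_Kmum_neq0.
Qed.
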